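(* Let $\mathtt{p}$ be a CF program that terminates on every input and that does not have call overlap. Then $\mathtt{p}$ is in CFpoly, i.e., there is a polynomial $\pi$ with $\mathit{time}_{\mathtt{p}}(x)\le\pi(|x|)$ for all $x\in\{0,1\}^*$.
   Context: CF (''cons-free'') is a first-order, call-by-value functional language over booleans and bit lists $\{0,1\}^*$. A program is a finite sequence of mutually recursive function definitions $\mathtt{f\ x1 \dots xm = e}$ ($m\ge0$), the first being a one-argument entry function. Expressions are $\mathtt{True}$, $\mathtt{False}$, $\mathtt{[]}$, variables, base calls $\mathtt{not\ e}$, $\mathtt{null\ e}$, $\mathtt{head\ e}$, $\mathtt{tail\ e}$, conditionals $\mathtt{if\ e_0\ then\ e_1\ else\ e_2}$, and calls $\mathtt{f\ e_1\dots e_m}$ of defined functions; there are no list constructors. Semantics is standard big-step call-by-value evaluation given by inference rules deriving $\mathtt{p},\rho\vdash\mathtt{e}\to v$; the derivation tree for the run on input $x$ is the computation tree $\mathcal{T}^{\mathtt{p},x}$, and the native running time $\mathit{time}_{\mathtt{p}}(x)$ is the number of nodes of $\mathcal{T}^{\mathtt{p},x}$. A CF program has call overlap if, on some input, it calls the same defined function more than once with the same tuple of argument values. CFpoly is the class of CF programs that terminate in polynomial (native) time. *)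

From Stdlib Require Import List Arith.
Import ListNotations.

(* Values: booleans and bit lists (bit 0 = false, bit 1 = true). *)
Inductive value : Type :=
| VBool : bool -> value
| VList : list bool -> value.

(* Expressions; variables are de Bruijn-style indices into the parameter
   list of the enclosing function definition; functions are referred to by
   their position in the program. *)
Inductive expr : Type :=
| ETrue | EFalse | ENil
| EVar  : nat -> expr
| ENot  : expr -> expr
| ENull : expr -> expr
| EHead : expr -> expr
| ETail : expr -> expr
| EIf   : expr -> expr -> expr -> expr
| ECall : nat -> list expr -> expr.

(* A program: a finite sequence of definitions  f x1 .. xm = e,
   each given as (m, e).  The first one is the entry function. *)
Definition program := list (nat * expr).

Fixpoint wf_expr (p : program) (m : nat) (e : expr) : Prop :=
  match e with
  | ETrue | EFalse | ENil => True
  | EVar i => i < m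
  | ENot e | ENull e | EHead e | ETail e => wf_expr p m e
  | EIf e0 e1 e2 => wf_expr p m e0 /\ wf_expr p m e1 /\ wf_expr p m e2
  | ECall f args =>
      (exists b, nth_error p f = Some (length args, b)) /\
      (fix go (l : list expr) : Prop :=
         match l with [] => True | a :: l => wf_expr p m a /\ go l end) args
  end.

Definition wf_program (p : program) : Prop :=
  (exists b, nth_error p 0 = Some (1, b)) /\
  Forall (fun d => wf_expr p (fst d) (snd d)) p.

(* Big-step call-by-value semantics  p, rho |- e -> v.  Derivations are
   Type-valued, so a derivation is a computation tree. head/tail of [] and
   ill-typed base calls have no rule. *)
Inductive eval (p : program) : list value -> expr -> value -> Type :=
| ev_true  rho : eval p rho ETrue (VBool true)
| ev_false rho : eval p rho EFalse (VBool false)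
| ev_nil   rho : eval p rho ENil (VList [])
| ev_var   rho i v : nth_error rho i = Some v -> eval p rho (EVar i) v
| ev_not   rho e b : eval p rho e (VBool b) -> eval p rho (ENot e) (VBool (negb b))
| ev_null  rho e l : eval p rho e (VList l) ->
                     eval p rho (ENull e) (VBool (match l with [] => true | _ => false end))
| ev_head  rho e b l : eval p rho e (VList (b :: l)) -> eval p rho (EHead e) (VBool b)
| ev_tail  rho e b l : eval p rho e (VList (b :: l)) -> eval p rho (ETail e) (VList l)
| ev_if_t  rho e0 e1 e2 v : eval p rho e0 (VBool true) -> eval p rho e1 v ->
                            eval p rho (EIf e0 e1 e2) v
| ev_if_f  rho e0 e1 e2 v : eval p rho e0 (VBool false) -> eval p rho e2 v ->
                            eval p rho (EIf e0 e1 e2) v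
| ev_call  rho f args vs body v :
    nth_error p f = Some (length args, body) ->
    evals p rho args vs -> eval p vs body v -> eval p rho (ECall f args) v
with evals (p : program) : list value -> list expr -> list value -> Type :=
| evs_nil  rho : evals p rho [] []
| evs_cons rho e es v vs : eval p rho e v -> evals p rho es vs ->
                           evals p rho (e :: es) (v :: vs).

Fixpoint size {p rho e v} (d : eval p rho e v) : nat :=
  match d with
  | ev_true _ _ | ev_false _ _ | ev_nil _ _ | ev_var _ _ _ _ _ => 1
  | ev_not _ _ _ _ d1 | ev_null _ _ _ _ d1
  | ev_head _ _ _ _ _ d1 | ev_tail _ _ _ _ _ d1 => 1 + size d1
  | ev_if_t _ _ _ _ _ _ d0 d1 | ev_if_f _ _ _ _ _ _ d0 d1 => 1 + size d0 + size d1
  | ev_call _ _ _ _ _ _ _ _ ds db => 1 + sizes ds + size db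
  end
with sizes {p rho es vs} (ds : evals p rho es vs) : nat :=
  match ds with
  | evs_nil _ _ => 0
  | evs_cons _ _ _ _ _ _ d ds => size d + sizes ds
  end.

Fixpoint calls {p rho e v} (d : eval p rho e v) : list (nat * list value) :=
  match d with
  | ev_true _ _ | ev_false _ _ | ev_nil _ _ | ev_var _ _ _ _ _ => []
  | ev_not _ _ _ _ d1 | ev_null _ _ _ _ d1
  | ev_head _ _ _ _ _ d1 | ev_tail _ _ _ _ _ d1 => calls d1
  | ev_if_t _ _ _ _ _ _ d0 d1 | ev_if_f _ _ _ _ _ _ d0 d1 => calls d0 ++ calls d1
  | @ev_call _ _ f _ vs _ _ _ ds db => (f, vs) :: callss ds ++ calls db
  end
with callss {p rho es vs} (ds : evals p rho es vs) : list (nat * list value) :=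
  match ds with
  | evs_nil _ _ => []
  | evs_cons _ _ _ _ _ _ d ds => calls d ++ callss ds
  end.

Definition run (p : program) (x : list bool) (v : value) : Type :=
  eval p [VList x] (ECall 0 [EVar 0]) v.

Definition terminates (p : program) : Prop :=
  forall x, exists v, inhabited (run p x v).

Definition no_call_overlap (p : program) : Prop :=
  forall x v (d : run p x v), NoDup (calls d).

Definition poly_time (p : program) : Prop :=
  exists a k : nat, forall x v (d : run p x v), size d <= a * length x ^ k + a.

(* Every value arising while running p on x is a boolean or a suffix of x, so
   a call has one of at most |p| * (|x| + 4) ^ A shapes, where A bounds the
   arities.  Without call overlap the computation tree contains each shape at
   most once, and between two call nodes it only evaluates one function body,
   which contributes a bounded number of nodes. *)

From Stdlib Require Import List Arith Lia.
Import ListNotations.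

Scheme eval_evals_ind := Induction for eval Sort Prop
  with evals_eval_ind := Induction for evals Sort Prop.

Lemma In_le_list_max (n : nat) (l : list nat) : In n l -> n <= list_max l.
Proof.
  intros Hn.
  assert (Hall : Forall (fun k => k <= list_max l) l) by now apply list_max_le.
  exact (proj1 (Forall_forall _ _) Hall n Hn).
Qed.

Fixpoint lists_upto {A : Type} (n : nat) (G : list A) : list (list A) :=
  match n with
  | 0 => [[]]
  | S n => [] :: flat_map (fun g => map (cons g) (lists_upto n G)) G
  end.

Lemma in_lists_upto {A : Type} n (G l : list A) :
  length l <= n -> incl l G -> In l (lists_upto n G).
Proof.
  revert l; induction n as [|n IH]; intros [|a l] Hlen Hincl; cbn in *;
    try lia; auto.
  apply incl_cons_inv in Hincl as [Ha Hl].
  right. apply in_flat_map. exists a.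
  split; [exact Ha | apply in_map, IH; [lia | exact Hl]].
Qed.

Lemma length_lists_upto {A : Type} n (G : list A) :
  length (lists_upto n G) <= S (length G) ^ n.
Proof.
  induction n as [|n IH]; cbn [lists_upto length]; [reflexivity|].
  rewrite (flat_map_constant_length (c := length (lists_upto n G)))
    by (intros; apply length_map).
  rewrite Nat.pow_succ_r'.
  assert (1 <= S (length G) ^ n) by (apply Nat.neq_0_lt_0, Nat.pow_nonzero; lia).
  nia.
Qed.

Fixpoint suffixes {A : Type} (x : list A) : list (list A) :=
  match x with [] => [[]] | b :: l => (b :: l) :: suffixes l end.

Lemma suffixes_self {A : Type} (x : list A) : In x (suffixes x).
Proof. destruct x; now left. Qed.

Lemma suffixes_nil {A : Type} (x : list A) : In [] (suffixes x).
Proof. induction x; cbn; auto. Qed.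

Lemma suffixes_tail {A : Type} (x : list A) b l :
  In (b :: l) (suffixes x) -> In l (suffixes x).
Proof.
  induction x as [|c x IH]; cbn; intros [Hx|Hx]; try easy; auto.
  injection Hx as -> ->. right. apply suffixes_self.
Qed.

Lemma length_suffixes {A : Type} (x : list A) : length (suffixes x) = S (length x).
Proof. induction x; cbn; auto. Qed.

Lemma pow_add_le n c k : (n + c) ^ k <= S c ^ k * (n ^ k + 1).
Proof.
  destruct n as [|n].
  - assert (c ^ k <= S c ^ k) by (apply Nat.pow_le_mono_l; lia). cbn. nia.
  - assert ((S n + c) ^ k <= (S c * S n) ^ k) by (apply Nat.pow_le_mono_l; nia).
    rewrite Nat.pow_mul_l in *. nia.
Qed.

Fixpoint expr_size (e : expr) : nat :=
  match e with
  | ETrue | EFalse | ENil | EVar _ => 1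
  | ENot e | ENull e | EHead e | ETail e => 1 + expr_size e
  | EIf e0 e1 e2 => 1 + expr_size e0 + expr_size e1 + expr_size e2
  | ECall _ args => 1 + list_sum (map expr_size args)
  end.

Definition max_body_size (p : program) : nat :=
  list_max (map (fun d => expr_size (snd d)) p).

Definition max_arity (p : program) : nat := list_max (map fst p).

Lemma nth_error_body_size (p : program) f n body :
  nth_error p f = Some (n, body) -> expr_size body <= max_body_size p.
Proof.
  intros Hf. apply In_le_list_max.
  exact (in_map (fun d => expr_size (snd d)) _ _ (nth_error_In _ _ Hf)).
Qed.

Lemma nth_error_arity (p : program) f n body :
  nth_error p f = Some (n, body) -> n <= max_arity p.
Proof.
  intros Hf. apply In_le_list_max.
  exact (in_map fst _ _ (nth_error_In _ _ Hf)).
Qed.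

(* Every node of a computation tree either is a call node or is charged to
   a node of the expression whose evaluation it belongs to: the top
   expression or the body of the function of the closest call above it. *)
Lemma size_le_calls (p : program) rho e v (d : eval p rho e v) :
  size d <= length (calls d) * (max_body_size p + 1) + expr_size e.
Proof.
  apply (eval_evals_ind p
    (fun rho e v d =>
       size d <= length (calls d) * (max_body_size p + 1) + expr_size e)
    (fun rho es vs ds =>
       sizes ds <= length (callss ds) * (max_body_size p + 1)
                   + list_sum (map expr_size es)));
    intros; cbn [size sizes calls callss expr_size map list_sum];
    rewrite ?length_app; cbn [length];
    try change (list_sum (?a :: ?l)) with (a + list_sum l); try lia.
  match goal with Hf : nth_error p _ = Some _ |- _ =>
    pose proof (nth_error_body_size _ _ _ _ Hf) end.
  rewrite length_app. nia.
Qed.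

Definition closed_values (G : list value) : Prop :=
  (forall b, In (VBool b) G) /\ In (VList []) G /\
  (forall b l, In (VList (b :: l)) G -> In (VList l) G).

Section ClosedValues.

Variable p : program.
Variable G : list value.
Hypothesis closed_G : closed_values G.

Definition bounded_call (c : nat * list value) : Prop :=
  fst c < length p /\ length (snd c) <= max_arity p /\ incl (snd c) G.

Lemma eval_closed rho e v (d : eval p rho e v) :
  incl rho G -> In v G /\ Forall bounded_call (calls d).
Proof.
  destruct closed_G as (G_bool & G_nil & G_tail).
  apply (eval_evals_ind p
    (fun rho e v d => incl rho G -> In v G /\ Forall bounded_call (calls d))
    (fun rho es vs ds => incl rho G ->
       incl vs G /\ length vs = length es /\ Forall bounded_call (callss ds)));
    intros; cbn [calls callss];
    repeat match goal with
    | IH : incl ?r G -> _, Hr : incl ?r G |- _ => specialize (IH Hr)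
    | IH : _ /\ _ |- _ => destruct IH
    end;
    rewrite ?Forall_app; auto.
  - split; [|constructor]. eauto using nth_error_In.
  - split; [eauto|auto].
  - split; [assumption|].
    constructor; [|now apply Forall_app].
    match goal with Hf : nth_error p _ = Some _ |- _ =>
      pose proof (nth_error_arity _ _ _ _ Hf);
      assert (f < length p) by (apply nth_error_Some; congruence) end.
    repeat split; cbn; auto. lia.
  - repeat split; auto using incl_nil_l.
  - repeat split; cbn; auto using incl_cons.
Qed.

Lemma length_bounded_calls (cs : list (nat * list value)) :
  NoDup cs -> Forall bounded_call cs ->
  length cs <= length p * length (lists_upto (max_arity p) G).
Proof.
  intros Hnd Hb.
  rewrite <- length_seq with (start := 0) (len := length p), <- length_prod.
  apply NoDup_incl_length; [exact Hnd|].
  intros [f vs] Hc. apply (proj1 (Forall_forall _ _) Hb) in Hc as (Hf & Hlen & Hvs).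
  apply in_prod; [apply in_seq; cbn in *; lia | now apply in_lists_upto].
Qed.

End ClosedValues.

Definition input_values (x : list bool) : list value :=
  VBool true :: VBool false :: map VList (suffixes x).

Lemma input_values_closed x : closed_values (input_values x).
Proof.
  split; [|split].
  - intros []; cbn; auto.
  - right; right. apply in_map, suffixes_nil.
  - cbn. intros b l [H|[H|H]]; try discriminate.
    apply in_map_iff in H as (s & [= ->] & Hs).
    right; right. apply in_map. exact (suffixes_tail _ _ _ Hs).
Qed.

Lemma length_input_values x : length (input_values x) = length x + 3.
Proof. cbn. rewrite length_map, length_suffixes. lia. Qed.

Lemma length_calls_run (p : program) x v (d : run p x v) :
  no_call_overlap p ->
  length (calls d) <= length p * (length x + 4) ^ max_arity p.
Proof.
  intros Hnco.
  assert (Hx : incl [VList x] (input_values x)).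
  { apply incl_cons, incl_nil_l. right; right. apply in_map, suffixes_self. }
  destruct (eval_closed p _ (input_values_closed x) _ _ _ d Hx) as [_ Hcalls].
  rewrite (length_bounded_calls p _ _ (Hnco x v d) Hcalls).
  apply Nat.mul_le_mono_l.
  rewrite length_lists_upto, length_input_values.
  now replace (S (length x + 3)) with (length x + 4) by lia.
Qed.

Theorem lemma6 (p : program) :
  wf_program p -> terminates p -> no_call_overlap p -> poly_time p.
Proof.
  intros _ _ Hnco.
  set (A := max_arity p).
  exists (length p * 5 ^ A * (max_body_size p + 1) + 2), A.
  intros x v d.
  pose proof (size_le_calls p _ _ _ d) as Hsize. cbn in Hsize.
  pose proof (length_calls_run p x v d Hnco) as Hcalls.
  pose proof (pow_add_le (length x) 4 A) as Hpow.
  fold A in Hcalls.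
  set (c := length (calls d)) in *.
  set (T := length x ^ A) in *.
  set (M := max_body_size p) in *.
  assert (c <= length p * 5 ^ A * (T + 1)).
  { rewrite <- Nat.mul_assoc. eapply Nat.le_trans; [exact Hcalls|].
    now apply Nat.mul_le_mono_l. }
  nia.
Qed.
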